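(* For each integer $d\ge 2$ define $$\alpha_d \;=\; \inf_{-\frac{1}{d-1}\le \gamma<\frac{1}{d+1}} \frac{1-\frac{F^*(d^2-1,\gamma)}{(d-1)^2}}{1-(d+1)\gamma}.$$ Then (i) $\alpha_d>\frac12\left(1-\frac1d\right)$ for every integer $d\ge 2$, and (ii) $\alpha_d-\frac12\left(1-\frac1d\right)\sim \frac{1}{2d^3}$ as $d\to\infty$, i.e. $\lim_{d\to\infty} 2d^3\left(\alpha_d-\frac12(1-\frac1d)\right)=1$.
   Context: For an integer $k\ge1$ and $\gamma\in[-1,1]$, $$F^*(k,\gamma)=\frac{2\gamma}{k}\left(\frac{\Gamma((k+1)/2)}{\Gamma(k/2)}\right)^2 {}_2F_1\!\left(\tfrac12,\tfrac12;\tfrac k2+1;\gamma^2\right),$$ where ${}_2F_1(a,b;c;z)=\sum_{n\ge0}\frac{(a)_n(b)_n}{(c)_n}\frac{z^n}{n!}$ is the Gaussian hypergeometric function and $(x)_n=\prod_{j=0}^{n-1}(x+j)$. (Equivalently, $F^*(k,\gamma)=\mathbb E\left\langle \frac{Zu}{\|Zu\|},\frac{Zv}{\|Zv\|}\right\rangle$ for unit vectors $u,v$ with $\langle u,v\rangle=\gamma$ and $Z$ a $k\times n$ matrix with i.i.d. standard Gaussian entries.) *)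

From Stdlib Require Import Reals.
From Coquelicot Require Import Coquelicot.
Open Scope R_scope.

Definition Gamma (x : R) : R :=
  RInt_gen (fun t => Rpower t (x - 1) * exp (- t))
           (at_right 0) (Rbar_locally p_infty).

Fixpoint poch (x : R) (n : nat) : R :=
  match n with
  | O => 1
  | S m => poch x m * (x + INR m)
  end.

Definition hyp2F1 (a b c z : R) : R :=
  Series (fun n => poch a n * poch b n / poch c n * z ^ n / INR (Factorial.fact n)).

Definition Fstar (k : nat) (g : R) : R :=
  2 * g / INR k * (Gamma ((INR k + 1) / 2) / Gamma (INR k / 2)) ^ 2
    * hyp2F1 (1/2) (1/2) (INR k / 2 + 1) (g ^ 2).

Definition alpha (d : nat) : Rbar :=
  let D := INR d in
  Glb_Rbar (fun y => exists g : R,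
     - (1 / (D - 1)) <= g /\ g < 1 / (D + 1) /\
     y = (1 - Fstar (d * d - 1) g / (D - 1) ^ 2) / (1 - (D + 1) * g)).

From Stdlib Require Import Reals Lra Psatz Classical_Prop.
From Coquelicot Require Import Coquelicot.
Open Scope R_scope.

(* Write D = d, m = (D-1)^2, k = D^2 - 1, t_D = (1 - 1/D)/2 and factor
     F*(k, g) = c_k * g * H_k(g^2),
   where c_k = (2/k) (Gamma((k+1)/2) / Gamma(k/2))^2 and H_k = 2F1(1/2,1/2;k/2+1;.).
   The proof rests on three estimates:
   - 1 <= H_k(z) <= 1/(1-z) for 0 <= z <= 1 (termwise comparison of the series,
     with a telescoping majorant to get convergence at z = 1);
   - k/(k+1) <= c_k <= 1, from Gamma(x+1) = x Gamma(x) and the midpoint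
     log-convexity Gamma((a+b)/2)^2 <= Gamma(a) Gamma(b) (Cauchy-Schwarz);
     both are proved from the integral definition of Gamma;
   - an elementary bound showing that every value of the quotient defining
     alpha_d is at least t_D + c_k/(2 D m).
   The endpoint g = -1/(D-1) gives the value t_D + c_k H_k(1/m)/(2 D m), so
   alpha_d is squeezed between these two numbers; this gives (i) since c_k > 0,
   and (ii) since 2 D^3 (alpha_d - t_D) then lies between 1 and 1 + 6/D. *)

Lemma exp_le_compat (a b : R) : a <= b -> exp a <= exp b.
Proof. intros [Hlt | ->]; [now left; apply exp_increasing | lra]. Qed.

Lemma ln_le_pred (u : R) : 0 < u -> ln u <= u - 1.
Proof. intros Hu; pose proof (exp_ineq1_le (ln u)) as He; rewrite exp_ln in He by exact Hu; lra. Qed.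

Lemma Rpower_gt0 (t y : R) : 0 < Rpower t y.
Proof. apply exp_pos. Qed.

Lemma poch_pos (x : R) (n : nat) : 0 < x -> 0 < poch x n.
Proof.
  intros Hx; induction n as [|n IH]; simpl; [lra|].
  pose proof (pos_INR n); apply Rmult_lt_0_compat; lra.
Qed.

Lemma poch_le (x y : R) (n : nat) : 0 < x <= y -> poch x n <= poch y n.
Proof.
  intros Hxy; induction n as [|n IH]; simpl; [lra|].
  pose proof (pos_INR n); pose proof (poch_pos x n ltac:(lra)).
  apply Rmult_le_compat; lra.
Qed.

Lemma poch_one (n : nat) : poch 1 n = INR (Factorial.fact n).
Proof.
  induction n as [|n IH]; simpl poch; [simpl; lra|].
  rewrite IH; change (Factorial.fact (S n)) with (S n * Factorial.fact n)%nat.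
  rewrite mult_INR, S_INR; ring.
Qed.

Lemma poch_half_telescope (n : nat) :
  poch (1/2) n / poch (5/2) n = 3/4 * (/ (INR n + 1/2) - / (INR n + 3/2)).
Proof.
  assert (Hrec : poch (1/2) n * (4 * (INR n + 1/2) * (INR n + 3/2)) = 3 * poch (5/2) n).
  { induction n as [|n IH]; simpl poch; [simpl; lra|]. rewrite S_INR.
    transitivity (poch (1/2) n * (4 * (INR n + 1/2) * (INR n + 3/2)) * (INR n + 5/2));
      [field | rewrite IH; ring]. }
  pose proof (pos_INR n); pose proof (poch_pos (5/2) n ltac:(lra)).
  apply Rmult_eq_reg_r with (poch (5/2) n * (4 * (INR n + 1/2) * (INR n + 3/2))); [|nra].
  transitivity (poch (1/2) n * (4 * (INR n + 1/2) * (INR n + 3/2))); [field; lra|].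
  rewrite Hrec; field; lra.
Qed.

Definition hyp_term (c z : R) (n : nat) : R :=
  poch (1/2) n * poch (1/2) n / poch c n * z ^ n / INR (Factorial.fact n).

Lemma hyp2F1_Series (c z : R) : hyp2F1 (1/2) (1/2) c z = Series (hyp_term c z).
Proof. reflexivity. Qed.

Lemma hyp_term_factor (c z : R) (n : nat) : 0 < c ->
  hyp_term c z n = poch (1/2) n / poch c n * (poch (1/2) n / INR (Factorial.fact n)) * z ^ n.
Proof.
  intros Hc; pose proof (poch_pos c n Hc); pose proof (INR_fact_lt_0 n).
  unfold hyp_term; field; lra.
Qed.

Lemma half_poch_le_fact (n : nat) :
  0 <= poch (1/2) n / INR (Factorial.fact n) <= 1.
Proof.
  pose proof (poch_pos (1/2) n ltac:(lra)); pose proof (INR_fact_lt_0 n).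
  pose proof (poch_le (1/2) 1 n ltac:(lra)) as Hle; rewrite poch_one in Hle.
  split; [apply Rdiv_le_0_compat; lra|].
  apply Rmult_le_reg_r with (INR (Factorial.fact n)); [lra|]. field_simplify; lra.
Qed.

Lemma half_poch_ratio_le (b c : R) (n : nat) : 0 < b <= c ->
  0 <= poch (1/2) n / poch c n <= poch (1/2) n / poch b n.
Proof.
  intros Hbc; pose proof (poch_pos (1/2) n ltac:(lra)).
  pose proof (poch_pos b n ltac:(lra)); pose proof (poch_le b c n Hbc).
  split; [apply Rdiv_le_0_compat; lra|].
  apply Rmult_le_compat_l; [lra|]. apply Rinv_le_contravar; lra.
Qed.

Lemma hyp_term_bounds (c z : R) (n : nat) : 1 <= c -> 0 <= z ->
  0 <= hyp_term c z n <= poch (1/2) n / poch c n * z ^ n.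
Proof.
  intros Hc Hz; rewrite hyp_term_factor by lra.
  pose proof (half_poch_ratio_le c c n ltac:(lra)); pose proof (half_poch_le_fact n).
  pose proof (pow_le z n Hz).
  split; [apply Rmult_le_pos; [apply Rmult_le_pos|]; lra|].
  apply Rmult_le_compat_r; [lra|]. rewrite <- (Rmult_1_r (_ / poch c n)) at 2.
  apply Rmult_le_compat_l; lra.
Qed.

(* The majorant (1/2)_n/(5/2)_n is summable (its partial sums telescope). *)
Lemma ex_series_half_poch_ratio : ex_series (fun n => poch (1/2) n / poch (5/2) n).
Proof.
  exists (3/4 * 2). change (is_lim_seq (sum_n (fun n => poch (1/2) n / poch (5/2) n)) (3/4 * 2)).
  apply is_lim_seq_ext with (fun N => 3/4 * (2 - / (INR N + 3/2))).
  { intros N; induction N as [|N IH].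
    - rewrite sum_O, poch_half_telescope; simpl; field.
    - rewrite sum_Sn, <- IH, poch_half_telescope, !S_INR; unfold plus; simpl.
      pose proof (pos_INR N); field; lra. }
  replace (3/4 * 2) with (3/4 * (2 - 0)) by ring.
  apply (is_lim_seq_scal_l _ (3/4) (2 - 0)), (is_lim_seq_minus' (fun _ => 2) _ 2 0).
  { apply is_lim_seq_const. }
  change (is_lim_seq (fun N => / (INR N + 3/2)) (Rbar_inv p_infty)).
  apply is_lim_seq_inv; [|discriminate].
  eapply is_lim_seq_le_p_loc; [|apply is_lim_seq_INR]. exists 0%nat; intros; lra.
Qed.

Lemma ex_series_hyp_term (c z : R) : 5/2 <= c -> 0 <= z <= 1 -> ex_series (hyp_term c z).
Proof.
  intros Hc Hz.
  apply (ex_series_le (K := R_AbsRing) (V := R_CompleteNormedModule)) with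
    (fun n => poch (1/2) n / poch (5/2) n); [|exact ex_series_half_poch_ratio].
  intros n; unfold norm; simpl; unfold abs; simpl.
  pose proof (hyp_term_bounds c z n ltac:(lra) ltac:(lra)) as [H0 H1].
  pose proof (half_poch_ratio_le (5/2) c n ltac:(lra)).
  assert (z ^ n <= 1) by (rewrite <- (pow1 n); apply pow_incr; lra).
  pose proof (pow_le z n (proj1 Hz)).
  rewrite Rabs_pos_eq by lra. nra.
Qed.

Lemma Series_ge_head (a : nat -> R) :
  (forall n, 0 <= a n) -> ex_series a -> a 0%nat <= Series a.
Proof.
  intros Ha Hs; rewrite Series_incr_1 by exact Hs.
  enough (0 <= Series (fun k => a (S k))) by lra.
  rewrite <- (Rmult_0_l (Series a)), <- Series_scal_l.
  apply Series_le; [intros n; rewrite Rmult_0_l; split; [lra | apply Ha]|].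
  now apply ex_series_incr_1 in Hs.
Qed.

Lemma hyp2F1_ge1 (c z : R) : 5/2 <= c -> 0 <= z <= 1 -> 1 <= hyp2F1 (1/2) (1/2) c z.
Proof.
  intros Hc Hz; rewrite hyp2F1_Series.
  replace 1 with (hyp_term c z 0) by (unfold hyp_term; simpl; field).
  apply Series_ge_head; [|now apply ex_series_hyp_term].
  intros n; apply hyp_term_bounds; lra.
Qed.

Lemma hyp2F1_le_geom (c z : R) : 1 <= c -> 0 <= z < 1 -> hyp2F1 (1/2) (1/2) c z <= / (1 - z).
Proof.
  intros Hc Hz; assert (Hq : Rabs z < 1) by (rewrite Rabs_pos_eq; lra).
  rewrite hyp2F1_Series, <- (is_series_unique _ _ (is_series_geom z Hq)).
  apply Series_le; [|now apply ex_series_geom].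
  intros n; pose proof (hyp_term_bounds c z n Hc ltac:(lra)).
  pose proof (half_poch_ratio_le 1 c n ltac:(lra)).
  pose proof (half_poch_ratio_le (1/2) 1 n ltac:(lra)) as Hle1.
  rewrite (Rdiv_diag (poch (1/2) n)) in Hle1 by (pose proof (poch_pos (1/2) n); lra).
  pose proof (pow_le z n (proj1 Hz)). nra.
Qed.

Lemma at_right0_le (a0 : R) : 0 < a0 -> at_right 0 (fun a => 0 < a <= a0).
Proof.
  intros Ha0; exists (mkposreal a0 Ha0); intros a Ha Hpos; split; [exact Hpos|].
  change (Rabs (a - 0) < a0) in Ha; apply Rabs_def2 in Ha; lra.
Qed.

Lemma ends_eventually (a0 b0 : R) (P : R * R -> Prop) : 0 < a0 ->
  (forall a b, 0 < a <= a0 -> b0 <= b -> P (a, b)) ->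
  filter_prod (at_right 0) (Rbar_locally p_infty) P.
Proof.
  intros Ha0 HP; apply (Filter_prod _ _ _ (fun a => 0 < a <= a0) (fun b => b0 <= b)).
  - now apply at_right0_le.
  - exists b0; intros; lra.
  - exact HP.
Qed.

Section PositiveIntegrand.

Variable f : R -> R.
Hypothesis f_cont : forall t, 0 < t -> continuous f t.
Hypothesis f_pos : forall t, 0 < t -> 0 < f t.

Lemma ex_RInt_pos_half_line (a b : R) : 0 < a -> a <= b -> ex_RInt f a b.
Proof.
  intros Ha Hab; apply (ex_RInt_continuous (V := R_CompleteNormedModule)).
  intros t Ht; apply f_cont; rewrite Rmin_left in Ht; lra.
Qed.

Lemma RInt_pos_mono (a' a b b' : R) : 0 < a' -> a' <= a -> a <= b -> b <= b' ->
  RInt f a b <= RInt f a' b'.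
Proof.
  intros H1 H2 H3 H4.
  rewrite <- (RInt_Chasles f a' a b'), <- (RInt_Chasles f a b b')
    by (apply ex_RInt_pos_half_line; lra).
  unfold plus; simpl.
  assert (0 <= RInt f a' a) by (apply RInt_ge_0; [lra | apply ex_RInt_pos_half_line; lra
     | intros t Ht; left; apply f_pos; lra]).
  assert (0 <= RInt f b b') by (apply RInt_ge_0; [lra | apply ex_RInt_pos_half_line; lra
     | intros t Ht; left; apply f_pos; lra]).
  lra.
Qed.

(* The improper integral exists (it is the supremum of the integrals over
   compact subintervals) and is positive. *)
Lemma is_RInt_gen_pos_bounded :
  (exists M, forall a b, 0 < a -> a <= b -> RInt f a b <= M) ->
  exists S, is_RInt_gen f (at_right 0) (Rbar_locally p_infty) S /\ 0 < S.
Proof.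
  intros [M HM].
  set (E := fun y => exists a b, 0 < a /\ a <= b /\ y = RInt f a b).
  assert (HE : E (RInt f 1 2)) by (exists 1, 2; repeat split; lra).
  destruct (completeness E) as [S [HS1 HS2]];
    [now exists M; intros y (a & b & Ha & Hab & ->); apply HM | now eexists; exact HE|].
  exists S; split.
  - intros P [eps HP].
    destruct (classic
      (exists a0 b0, 0 < a0 /\ a0 <= b0 /\ S - eps < RInt f a0 b0))
      as [(a0 & b0 & Ha0 & Hab0 & Hlt) | Hno].
    2:{ exfalso; enough (S <= S - eps) by (pose proof (cond_pos eps); lra).
        apply HS2; intros y (a & b & Ha & Hab & ->).
        apply Rnot_lt_le; intros Hc; apply Hno; now exists a, b. }
    apply (ends_eventually a0 b0); [exact Ha0|]; intros a b Ha Hb; simpl.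
    exists (RInt f a b); split;
      [apply (RInt_correct (V := R_CompleteNormedModule)), ex_RInt_pos_half_line; lra|].
    apply HP; assert (RInt f a b <= S) by (apply HS1; exists a, b; repeat split; lra).
    assert (RInt f a0 b0 <= RInt f a b) by (apply RInt_pos_mono; lra).
    change (Rabs (RInt f a b - S) < eps); apply Rabs_def1; lra.
  - apply Rlt_le_trans with (RInt f 1 2); [|now apply HS1].
    assert (HI : RInt (fun _ => 0) 1 2 < RInt f 1 2).
    { apply RInt_lt; [lra | intros; apply f_cont; lra | intros; apply continuous_const
      | intros; apply f_pos; lra]. }
    rewrite RInt_const in HI; unfold scal in HI; simpl in HI; unfold mult in HI; simpl in HI; lra.
Qed.

End PositiveIntegrand.

Definition gamma_integrand (x t : R) : R := Rpower t (x - 1) * exp (- t).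

Lemma Rpower_is_derive (y t : R) : 0 < t -> is_derive (fun u => Rpower u y) t (y * Rpower t (y - 1)).
Proof. intros Ht; now apply is_derive_Reals, derivable_pt_lim_power. Qed.

Lemma Rpower_continuous (y t : R) : 0 < t -> continuous (fun u => Rpower u y) t.
Proof.
  intros Ht; apply (ex_derive_continuous (K := R_AbsRing) (V := R_NormedModule)).
  eexists; now apply Rpower_is_derive.
Qed.

Lemma gamma_integrand_continuous (x t : R) : 0 < t -> continuous (gamma_integrand x) t.
Proof.
  intros Ht; apply (continuous_mult (fun u => Rpower u (x - 1)) (fun u => exp (- u))).
  - now apply Rpower_continuous.
  - apply (ex_derive_continuous (K := R_AbsRing) (V := R_NormedModule)); auto_derive; auto.
Qed.

Lemma gamma_integrand_pos (x t : R) : 0 < gamma_integrand x t.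
Proof. apply Rmult_lt_0_compat; apply exp_pos. Qed.

Lemma Rpower_exp_decay (y t : R) : 1 <= t ->
  Rpower t y * exp (- t) <= exp (4 * y ^ 2) * exp (- t / 2).
Proof.
  intros Ht; unfold Rpower; rewrite <- !exp_plus; apply exp_le_compat.
  assert (Hs : 0 < sqrt t) by (apply sqrt_lt_R0; lra).
  assert (Hss : sqrt t * sqrt t = t) by (apply sqrt_sqrt; lra).
  assert (Hln : ln t = 2 * ln (sqrt t))
    by (rewrite <- Hss at 1; rewrite ln_mult by lra; ring).
  assert (Hl0 : 0 <= ln t) by (rewrite <- ln_1; apply ln_le; lra).
  pose proof (ln_le_pred (sqrt t) Hs).
  assert (y * ln t <= Rabs y * (2 * sqrt t)).
  { apply Rle_trans with (Rabs y * ln t);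
      [apply Rmult_le_compat_r; [lra | apply Rle_abs]
      | apply Rmult_le_compat_l; [apply Rabs_pos | lra]]. }
  pose proof (pow2_abs y); pose proof (pow2_ge_0 (2 * Rabs y - sqrt t / 2)). nra.
Qed.

Lemma RInt_gamma_near0 (x a : R) : 0 < x -> 0 < a <= 1 -> RInt (gamma_integrand x) a 1 <= / x.
Proof.
  intros Hx Ha.
  assert (HI : is_RInt (fun u => Rpower u (x - 1)) a 1 (/ x * Rpower 1 x - / x * Rpower a x)).
  { apply (is_RInt_derive (fun u => / x * Rpower u x)); intros t Ht;
      rewrite Rmin_left, Rmax_right in Ht by lra.
    - evar (l : R); replace (Rpower t (x - 1)) with l;
        [apply (is_derive_scal (fun u => Rpower u x)), Rpower_is_derive; lra | unfold l; field; lra].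
    - apply Rpower_continuous; lra. }
  apply Rle_trans with (RInt (fun u => Rpower u (x - 1)) a 1).
  - apply RInt_le; [lra | apply (ex_RInt_pos_half_line (gamma_integrand x));
      [apply gamma_integrand_continuous | lra | lra] | eexists; exact HI |].
    intros t Ht; unfold gamma_integrand; pose proof (Rpower_gt0 t (x - 1)).
    assert (exp (- t) <= 1) by (rewrite <- exp_0; apply exp_le_compat; lra). nra.
  - assert (H1 : Rpower 1 x = 1) by (unfold Rpower; rewrite ln_1, Rmult_0_r; apply exp_0).
    rewrite (is_RInt_unique _ _ _ _ HI), H1.
    pose proof (Rpower_gt0 a x); assert (0 < / x) by (apply Rinv_0_lt_compat; lra). nra.
Qed.

Lemma RInt_gamma_far (x b : R) : 1 <= b -> RInt (gamma_integrand x) 1 b <= 2 * exp (4 * (x - 1) ^ 2).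
Proof.
  intros Hb; set (C := exp (4 * (x - 1) ^ 2)); assert (HC : 0 < C) by apply exp_pos.
  assert (HI : is_RInt (fun u => C * exp (- u / 2)) 1 b
                 (- 2 * C * exp (- b / 2) - - 2 * C * exp (- (1) / 2))).
  { apply (is_RInt_derive (fun u => - 2 * C * exp (- u / 2))); intros t _.
    - auto_derive; [auto | unfold Rdiv; field].
    - apply (ex_derive_continuous (K := R_AbsRing) (V := R_NormedModule)); auto_derive; auto. }
  apply Rle_trans with (RInt (fun u => C * exp (- u / 2)) 1 b).
  - apply RInt_le; [lra | apply (ex_RInt_pos_half_line (gamma_integrand x));
      [apply gamma_integrand_continuous | lra | lra] | eexists; exact HI |].
    intros t Ht; apply Rpower_exp_decay; lra.
  - rewrite (is_RInt_unique _ _ _ _ HI).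
    assert (0 < C * exp (- b / 2)) by (apply Rmult_lt_0_compat; [lra | apply exp_pos]).
    assert (exp (- (1) / 2) <= 1) by (rewrite <- exp_0 at 2; apply exp_le_compat; lra).
    assert (C * exp (- (1) / 2) <= C) by (rewrite <- (Rmult_1_r C) at 2; apply Rmult_le_compat_l; lra).
    lra.
Qed.

Lemma RInt_gamma_bounded (x : R) : 0 < x ->
  exists M, forall a b, 0 < a -> a <= b -> RInt (gamma_integrand x) a b <= M.
Proof.
  intros Hx; exists (/ x + 2 * exp (4 * (x - 1) ^ 2)); intros a b Ha Hab.
  assert (Hcont := gamma_integrand_continuous x).
  assert (Hpos : forall t, 0 < t -> 0 < gamma_integrand x t) by (intros; apply gamma_integrand_pos).
  assert (Hm : 0 < Rmin a 1) by (apply Rmin_glb_lt; lra).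
  eapply Rle_trans; [apply (RInt_pos_mono _ Hcont Hpos (Rmin a 1) a b (Rmax b 1));
    [exact Hm | apply Rmin_l | exact Hab | apply Rmax_l]|].
  rewrite <- (RInt_Chasles _ (Rmin a 1) 1 (Rmax b 1))
    by (apply ex_RInt_pos_half_line; [exact Hcont | lra | first [apply Rmin_r | apply Rmax_r]]).
  change (plus ?u ?v) with (Rplus u v); apply Rplus_le_compat.
  - apply RInt_gamma_near0; [lra | split; [lra | apply Rmin_r]].
  - apply RInt_gamma_far, Rmax_r.
Qed.

Lemma Gamma_spec (x : R) : 0 < x ->
  is_RInt_gen (gamma_integrand x) (at_right 0) (Rbar_locally p_infty) (Gamma x) /\ 0 < Gamma x.
Proof.
  intros Hx.
  destruct (is_RInt_gen_pos_bounded (gamma_integrand x)) as (S & HS & Spos);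
    [apply gamma_integrand_continuous | intros; apply gamma_integrand_pos
    | now apply RInt_gamma_bounded |].
  assert (HG : Gamma x = S)
    by (unfold Gamma; apply (is_RInt_gen_unique (V := R_CompleteNormedModule)); exact HS).
  rewrite HG; split; assumption.
Qed.

Lemma is_RInt_gen_half_line_derive (F f : R -> R) (la lb : R) :
  (forall t, 0 < t -> is_derive F t (f t)) ->
  (forall t, 0 < t -> continuous f t) ->
  filterlim F (at_right 0) (locally la) ->
  filterlim F (Rbar_locally p_infty) (locally lb) ->
  is_RInt_gen f (at_right 0) (Rbar_locally p_infty) (lb - la).
Proof.
  intros HF Hf Hla Hlb.
  assert (HD : forall t, 0 < t -> Derive F t = f t) by (intros; now apply is_derive_unique, HF).
  assert (Hmin : forall a b t, 0 < a <= 1 -> 1 <= b -> Rmin a b <= t -> 0 < t)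
    by (intros a b t Ha Hb Ht; rewrite Rmin_left in Ht; lra).
  apply (is_RInt_gen_ext (Derive F)).
  { apply (ends_eventually 1 1); [lra|]; intros a b Ha Hb t Ht; apply HD.
    simpl in Ht; apply (Hmin a b); lra. }
  apply is_RInt_gen_Derive; [| |exact Hla|exact Hlb];
    apply (ends_eventually 1 1); try lra; intros a b Ha Hb t Ht; simpl in Ht;
    assert (Ht0 : 0 < t) by (apply (Hmin a b); lra).
  - eexists; now apply HF.
  - apply continuous_ext_loc with f; [|now apply Hf].
    exists (mkposreal t Ht0); intros u Hu; symmetry; apply HD.
    change (Rabs (u - t) < t) in Hu; apply Rabs_def2 in Hu; lra.
Qed.

(* The boundary term -t^x e^(-t) of the integration by parts giving the
   recurrence of Gamma; it vanishes at both ends of (0, +oo). *)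
Definition gamma_boundary (x t : R) : R := - (Rpower t x * exp (- t)).

Lemma gamma_boundary_derive (x t : R) : 0 < t ->
  is_derive (gamma_boundary x) t (gamma_integrand (x + 1) t - x * gamma_integrand x t).
Proof.
  intros Ht.
  assert (H2 : is_derive (fun u => exp (- u)) t (- exp (- t))) by (auto_derive; auto; ring).
  assert (HD := is_derive_opp _ _ _ (is_derive_mult _ _ _ _ _ (Rpower_is_derive x t Ht) H2
                                       ltac:(intros; apply Rmult_comm))).
  replace (gamma_integrand (x + 1) t - x * gamma_integrand x t) with
    (opp (plus (mult (x * Rpower t (x - 1)) (exp (- t))) (mult (Rpower t x) (- exp (- t))))).
  - exact HD.
  - unfold gamma_integrand; replace (x + 1 - 1) with x by ring.
    unfold opp, plus, mult; simpl; ring.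
Qed.

Lemma gamma_boundary_at_0 (x : R) : 0 < x -> filterlim (gamma_boundary x) (at_right 0) (locally 0).
Proof.
  intros Hx P [eps HP].
  assert (Hd : 0 < Rpower eps (/ x)) by apply Rpower_gt0.
  exists (mkposreal _ Hd); intros t Ht Ht0; apply HP.
  change (Rabs (t - 0) < Rpower eps (/ x)) in Ht; apply Rabs_def2 in Ht.
  change (Rabs (gamma_boundary x t - 0) < eps).
  unfold gamma_boundary; rewrite Rminus_0_r, Rabs_Ropp.
  pose proof (Rpower_gt0 t x); pose proof (exp_pos (- t)).
  assert (exp (- t) <= 1) by (rewrite <- exp_0; apply exp_le_compat; lra).
  assert (Rpower t x < eps).
  { rewrite <- (Rpower_1 eps), <- (Rinv_l x), <- Rpower_mult by (pose proof (cond_pos eps); lra).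
    apply Rlt_Rpower_l; lra. }
  rewrite Rabs_pos_eq by nra; nra.
Qed.

Lemma gamma_boundary_at_infty (x : R) :
  filterlim (gamma_boundary x) (Rbar_locally p_infty) (locally 0).
Proof.
  intros P [eps HP]; set (C := exp (4 * x ^ 2)).
  assert (HC : 0 < C) by apply exp_pos; pose proof (cond_pos eps) as He.
  exists (Rmax 1 (-2 * ln (eps / C))); intros t Ht; apply HP.
  assert (Ht1 : 1 < t) by (eapply Rle_lt_trans; [apply Rmax_l | exact Ht]).
  assert (Ht2 : -2 * ln (eps / C) < t) by (eapply Rle_lt_trans; [apply Rmax_r | exact Ht]).
  change (Rabs (gamma_boundary x t - 0) < eps).
  unfold gamma_boundary; rewrite Rminus_0_r, Rabs_Ropp.
  pose proof (Rpower_gt0 t x); pose proof (exp_pos (- t)).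
  rewrite Rabs_pos_eq by nra.
  assert (Hsmall : exp (- t / 2) < eps / C).
  { rewrite <- (exp_ln (eps / C)) by (apply Rdiv_lt_0_compat; lra).
    apply exp_increasing; lra. }
  assert (C * exp (- t / 2) < eps).
  { apply Rmult_lt_compat_l with (r := C) in Hsmall; [|lra].
    now replace (C * (eps / C)) with (pos eps) in Hsmall by (field; lra). }
  pose proof (Rpower_exp_decay x t ltac:(lra)); unfold C in *; lra.
Qed.

Lemma Gamma_succ (x : R) : 0 < x -> Gamma (x + 1) = x * Gamma x.
Proof.
  intros Hx.
  destruct (Gamma_spec x Hx) as [H0 _]; destruct (Gamma_spec (x + 1) ltac:(lra)) as [H1 _].
  assert (Hibp := is_RInt_gen_half_line_derive (gamma_boundary x)
    (fun t => gamma_integrand (x + 1) t - x * gamma_integrand x t) 0 0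
    (gamma_boundary_derive x)
    ltac:(intros t Ht; apply (continuous_minus (V := R_NormedModule));
            [| apply (continuous_scal_r (V := R_NormedModule))]; now apply gamma_integrand_continuous)
    (gamma_boundary_at_0 x Hx) (gamma_boundary_at_infty x)).
  assert (Hdiff := is_RInt_gen_minus _ _ _ _ H1 (is_RInt_gen_scal _ x _ H0)).
  pose proof (is_RInt_gen_unique (V := R_CompleteNormedModule) _ _ Hdiff) as E1.
  pose proof (is_RInt_gen_unique (V := R_CompleteNormedModule) _ _ Hibp) as E2.
  assert (E : Gamma (x + 1) - x * Gamma x = 0 - 0) by (rewrite <- E2; symmetry; exact E1).
  lra.
Qed.

(* Pointwise AM-GM: for every l > 0 the midpoint integrand is dominated by
   (l^2 t^(a-1) + t^(b-1)) e^(-t) / (2l). *)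
Lemma gamma_integrand_midpoint_le (a b l t : R) : 0 < l ->
  gamma_integrand ((a + b) / 2) t
  <= / (2 * l) * (l ^ 2 * gamma_integrand a t + gamma_integrand b t).
Proof.
  intros Hl; unfold gamma_integrand.
  set (p := Rpower t ((a - 1) / 2)); set (q := Rpower t ((b - 1) / 2)).
  assert (Hsq : forall y, Rpower t (2 * y) = Rpower t y * Rpower t y)
    by (intros y; rewrite <- Rpower_plus; f_equal; ring).
  replace (a - 1) with (2 * ((a - 1) / 2)) by field; replace (b - 1) with (2 * ((b - 1) / 2)) by field.
  replace ((a + b) / 2 - 1) with ((a - 1) / 2 + (b - 1) / 2) by field.
  rewrite !Hsq, Rpower_plus; fold p q.
  pose proof (Rpower_gt0 t ((a - 1) / 2)); pose proof (Rpower_gt0 t ((b - 1) / 2)).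
  pose proof (exp_pos (- t)); pose proof (pow2_ge_0 (l * p - q)).
  replace (/ (2 * l) * (l ^ 2 * (p * p * exp (- t)) + q * q * exp (- t)))
    with (p * q * exp (- t) + (l * p - q) ^ 2 * exp (- t) / (2 * l)) by (field; lra).
  assert (0 <= (l * p - q) ^ 2 * exp (- t) / (2 * l))
    by (apply Rdiv_le_0_compat; [apply Rmult_le_pos|]; lra).
  lra.
Qed.

Lemma Gamma_midpoint_le (a b l : R) : 0 < a -> 0 < b -> 0 < l ->
  Gamma ((a + b) / 2) <= / (2 * l) * (l ^ 2 * Gamma a + Gamma b).
Proof.
  intros Ha Hb Hl.
  destruct (Gamma_spec a Ha) as [HA _]; destruct (Gamma_spec b Hb) as [HB _].
  destruct (Gamma_spec ((a + b) / 2) ltac:(lra)) as [HM _].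
  assert (HG := is_RInt_gen_scal _ (/ (2 * l)) _
                  (is_RInt_gen_plus _ _ _ _ (is_RInt_gen_scal _ (l ^ 2) _ HA) HB)).
  eapply Rle_trans; [apply Rle_abs|].
  refine (RInt_gen_norm (V := R_CompleteNormedModule) _ _ _ _ _ _ HM HG).
  { apply (ends_eventually 1 1); [lra|]; intros; simpl; lra. }
  apply (ends_eventually 1 1); [lra|]; intros u v Hu Hv t Ht; simpl in Ht.
  unfold norm; simpl; unfold abs; simpl; unfold scal, plus; simpl; unfold mult; simpl.
  rewrite Rabs_pos_eq by (left; apply gamma_integrand_pos).
  now apply gamma_integrand_midpoint_le.
Qed.

(* Optimizing in l gives midpoint log-convexity of Gamma. *)
Lemma Gamma_log_convex_midpoint (a b : R) : 0 < a -> 0 < b ->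
  Gamma ((a + b) / 2) ^ 2 <= Gamma a * Gamma b.
Proof.
  intros Ha Hb.
  destruct (Gamma_spec a Ha) as [_ PA]; destruct (Gamma_spec ((a + b) / 2) ltac:(lra)) as [_ PM].
  pose proof (Gamma_midpoint_le a b (Gamma ((a + b) / 2) / Gamma a) Ha Hb
                ltac:(apply Rdiv_lt_0_compat; lra)) as Hle.
  set (M := Gamma ((a + b) / 2)) in *; set (A := Gamma a) in *; set (B := Gamma b) in *.
  replace (/ (2 * (M / A)) * ((M / A) ^ 2 * A + B)) with (M / 2 + A * B / (2 * M)) in Hle
    by (field; lra).
  apply Rmult_le_reg_r with (/ (2 * M)); [apply Rinv_0_lt_compat; lra|].
  replace (M ^ 2 * / (2 * M)) with (M / 2) by (field; lra). lra.
Qed.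

Definition gamma_ratio (k : R) : R := 2 / k * (Gamma ((k + 1) / 2) / Gamma (k / 2)) ^ 2.

(* Gautschi-type bounds k/(k+1) <= c_k <= 1, from log-convexity applied to
   the triples (k/2, (k+1)/2, k/2+1) and ((k+1)/2, k/2+1, (k+3)/2). *)
Lemma gamma_ratio_bounds (k : R) : 0 < k -> k / (k + 1) <= gamma_ratio k <= 1.
Proof.
  intros Hk; set (a := k / 2); assert (Ha : 0 < a) by (unfold a; lra).
  destruct (Gamma_spec a Ha) as [_ P0].
  pose proof (Gamma_succ a Ha) as R0; pose proof (Gamma_succ (a + 1/2) ltac:(lra)) as R1.
  pose proof (Gamma_log_convex_midpoint a (a + 1) Ha ltac:(lra)) as C1.
  pose proof (Gamma_log_convex_midpoint (a + 1/2) (a + 1/2 + 1) ltac:(lra) ltac:(lra)) as C2.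
  replace ((a + (a + 1)) / 2) with (a + 1/2) in C1 by field.
  replace ((a + 1/2 + (a + 1/2 + 1)) / 2) with (a + 1) in C2 by field.
  rewrite R0 in C1; rewrite R0, R1 in C2.
  unfold gamma_ratio; replace ((k + 1) / 2) with (a + 1/2) by (unfold a; field); fold a.
  replace (2 / k) with (/ a) by (unfold a; field; lra).
  replace (/ a * (Gamma (a + 1/2) / Gamma a) ^ 2)
    with (Gamma (a + 1/2) ^ 2 / (a * Gamma a ^ 2)) by (field; lra).
  replace (k / (k + 1)) with (a / (a + 1/2)) by (unfold a; field; lra).
  set (G0 := Gamma a) in *; set (G1 := Gamma (a + 1/2)) in *.
  assert (Hden : 0 < a * G0 ^ 2) by (apply Rmult_lt_0_compat; [lra | apply pow_lt; lra]).
  split.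
  - apply Rmult_le_reg_r with ((a + 1/2) * (a * G0 ^ 2)); [nra|].
    replace (a / (a + 1/2) * ((a + 1/2) * (a * G0 ^ 2))) with ((a * G0) ^ 2) by (field; lra).
    replace (G1 ^ 2 / (a * G0 ^ 2) * ((a + 1/2) * (a * G0 ^ 2))) with (G1 * ((a + 1/2) * G1))
      by (field; lra).
    exact C2.
  - apply Rmult_le_reg_r with (a * G0 ^ 2); [exact Hden|].
    replace (G1 ^ 2 / (a * G0 ^ 2) * (a * G0 ^ 2)) with (G1 ^ 2) by (field; lra). nra.
Qed.

Lemma Fstar_factor (k : nat) (g : R) :
  Fstar k g = gamma_ratio (INR k) * g * hyp2F1 (1/2) (1/2) (INR k / 2 + 1) (g ^ 2).
Proof. unfold Fstar, gamma_ratio, Rdiv; ring. Qed.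

Lemma div_le_self (x m : R) : 0 <= x -> 1 <= m -> x / m <= x.
Proof.
  intros Hx Hm; apply Rmult_le_reg_r with m; [lra|].
  unfold Rdiv; rewrite Rmult_assoc, Rinv_l by lra; nra.
Qed.

Lemma gap_le_half_inv (D c : R) : 2 <= D -> 0 < c <= 1 ->
  c / (2 * D * (D - 1) ^ 2) <= 1 / (2 * D).
Proof.
  intros HD Hc; replace (c / (2 * D * (D - 1) ^ 2)) with (c / (2 * D) / (D - 1) ^ 2) by (field; lra).
  assert (0 < / (2 * D)) by (apply Rinv_0_lt_compat; lra).
  apply Rle_trans with (c / (2 * D)); [apply div_le_self; unfold Rdiv; nra | unfold Rdiv; nra].
Qed.

(* For g >= 0 the quotient is at least 5/8, while t_D + c/(2 D m) <= 1/2. *)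
Lemma quotient_lower_bound_nonneg (D c H g : R) : 2 <= D -> 0 < c <= 1 ->
  0 <= g < 1 / (D + 1) -> 0 <= H <= / (1 - g ^ 2) ->
  1/2 * (1 - 1/D) + c / (2 * D * (D - 1) ^ 2) <= (1 - c * g * H / (D - 1) ^ 2) / (1 - (D + 1) * g).
Proof.
  intros HD Hc Hg HH; set (m := (D - 1) ^ 2); assert (Hm : 1 <= m) by (unfold m; nra).
  assert (Hg' : (D + 1) * g < 1).
  { destruct Hg as [_ Hg]; apply Rmult_lt_compat_l with (r := D + 1) in Hg; [|lra].
    now replace ((D + 1) * (1 / (D + 1))) with 1 in Hg by (field; lra). }
  assert (HH98 : H <= 9/8).
  { apply Rle_trans with (1 := proj2 HH); replace (9/8) with (/ (1 - 1/9)) by field.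
    apply Rinv_le_contravar; nra. }
  assert (Hnum : c * g * H / m <= 3/8).
  { assert (Hcg : 0 <= c * g <= 1/3) by (split; nra).
    apply Rle_trans with (c * g * H); [apply div_le_self; [|lra]|]; nra. }
  pose proof (gap_le_half_inv D c HD Hc) as Hgap; fold m in Hgap.
  apply Rle_trans with (1 - c * g * H / m).
  - replace (1/2 * (1 - 1/D)) with (1/2 - 1 / (2 * D)) by (field; lra); lra.
  - apply Rmult_le_reg_r with (1 - (D + 1) * g); [lra|].
    replace ((1 - c * g * H / m) / (1 - (D + 1) * g) * (1 - (D + 1) * g))
      with (1 - c * g * H / m) by (field; lra).
    assert (0 <= (D + 1) * g) by nra.
    assert (0 <= (1 - c * g * H / m) * ((D + 1) * g)) by (apply Rmult_le_pos; lra).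
    lra.
Qed.

(* For g < 0 the gap factors as
     (1 - c g/m) - (t_D + c/(2Dm)) (1 - (D+1) g) = A (1 + (D-1) g)
   with A >= 0, and 1 + (D-1) g >= 0 on the admissible range. *)
Lemma quotient_lower_bound_neg (D c H g : R) : 2 <= D -> 0 < c <= 1 ->
  - (1 / (D - 1)) <= g < 0 -> 1 <= H ->
  1/2 * (1 - 1/D) + c / (2 * D * (D - 1) ^ 2) <= (1 - c * g * H / (D - 1) ^ 2) / (1 - (D + 1) * g).
Proof.
  intros HD Hc Hg HH; set (m := (D - 1) ^ 2); assert (Hm : 1 <= m) by (unfold m; nra).
  set (A := (D + 1) / (2 * D) - c / (2 * D * m)).
  assert (Hid : 1 - c * g / m - (1/2 * (1 - 1/D) + c / (2 * D * m)) * (1 - (D + 1) * g)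
                = A * (1 + (D - 1) * g)) by (unfold A, m; field; lra).
  assert (HA : 0 <= A).
  { pose proof (gap_le_half_inv D c HD Hc) as Hgap; fold m in Hgap.
    assert (1 / (2 * D) <= (D + 1) / (2 * D))
      by (unfold Rdiv; apply Rmult_le_compat_r; [left; apply Rinv_0_lt_compat|]; lra).
    unfold A; lra. }
  assert (Hg0 : 0 <= 1 + (D - 1) * g).
  { destruct Hg as [Hg _]; apply Rmult_le_compat_l with (r := D - 1) in Hg; [|lra].
    replace ((D - 1) * - (1 / (D - 1))) with (-1) in Hg by (field; lra); lra. }
  assert (HcgH : c * g * H / m <= c * g / m).
  { assert (c * g < 0) by nra.
    unfold Rdiv; apply Rmult_le_compat_r; [left; apply Rinv_0_lt_compat; lra | nra]. }
  apply Rmult_le_reg_r with (1 - (D + 1) * g); [nra|].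
  replace ((1 - c * g * H / m) / (1 - (D + 1) * g) * (1 - (D + 1) * g))
    with (1 - c * g * H / m) by (field; nra).
  nra.
Qed.

Lemma quotient_lower_bound (D c H g : R) : 2 <= D -> 0 < c <= 1 ->
  - (1 / (D - 1)) <= g < 1 / (D + 1) -> 1 <= H -> (0 <= g -> H <= / (1 - g ^ 2)) ->
  1/2 * (1 - 1/D) + c / (2 * D * (D - 1) ^ 2) <= (1 - c * g * H / (D - 1) ^ 2) / (1 - (D + 1) * g).
Proof.
  intros HD Hc Hg HH1 HH2; destruct (Rle_or_lt 0 g) as [Hg0 | Hg0].
  - apply quotient_lower_bound_nonneg; try split; try lra; now apply HH2.
  - apply quotient_lower_bound_neg; lra.
Qed.

Lemma Glb_Rbar_bracket (E : R -> Prop) (lb y0 : R) :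
  (forall y, E y -> lb <= y) -> E y0 -> exists r, Glb_Rbar E = Finite r /\ lb <= r <= y0.
Proof.
  intros Hlb Hy0; destruct (Glb_Rbar_correct E) as [Hl1 Hl2].
  specialize (Hl2 lb Hlb); specialize (Hl1 y0 Hy0).
  destruct (Glb_Rbar E) as [r | |]; simpl in Hl1, Hl2; try contradiction.
  now exists r.
Qed.

Lemma INR_sq_pred (d : nat) : (1 <= d)%nat -> INR (d * d - 1) = INR d * INR d - 1.
Proof. intros Hd; rewrite minus_INR, mult_INR by nia; reflexivity. Qed.

(* alpha_d is finite and lies between t_D + c_k/(2 D m) (lower bound on the
   quotient) and t_D + c_k H_k(1/m)/(2 D m) (its value at g = -1/(D-1)). *)
Lemma alpha_bracket (d : nat) : (2 <= d)%nat ->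
  let D := INR d in let m := (D - 1) ^ 2 in let c := gamma_ratio (D * D - 1) in
  exists r, alpha d = Finite r /\
    1/2 * (1 - 1/D) + c / (2 * D * m) <= r /\
    r <= 1/2 * (1 - 1/D) + c * hyp2F1 (1/2) (1/2) ((D * D - 1) / 2 + 1) (/ m) / (2 * D * m).
Proof.
  intros Hd D m c.
  assert (HD : 2 <= D) by (unfold D; replace 2 with (INR 2) by (simpl; lra); now apply le_INR).
  assert (Hm : 1 <= m) by (unfold m; nra).
  pose proof (gamma_ratio_bounds (D * D - 1) ltac:(nra)) as [Hc1 Hc2]; fold c in Hc1, Hc2.
  assert (Hc : 0 < c <= 1) by (split; [eapply Rlt_le_trans; [|exact Hc1]; apply Rdiv_lt_0_compat|]; nra).
  assert (Hk : 5/2 <= (D * D - 1) / 2 + 1) by nra.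
  apply Glb_Rbar_bracket.
  - intros y (g & Hg1 & Hg2 & ->); fold D in Hg1, Hg2 |- *.
    rewrite Fstar_factor, INR_sq_pred by lia; fold D c.
    assert (Hg2' : g ^ 2 <= 1).
    { assert (1 / (D - 1) <= 1) by (apply Rmult_le_reg_r with (D - 1); [lra|]; field_simplify; lra).
      assert (1 / (D + 1) <= 1) by (apply Rmult_le_reg_r with (D + 1); [lra|]; field_simplify; lra).
      nra. }
    apply quotient_lower_bound; auto.
    + apply hyp2F1_ge1; [lra | split; [apply pow2_ge_0 | lra]].
    + intros Hg0; apply hyp2F1_le_geom; [lra|]. split; [apply pow2_ge_0|].
      assert (1 / (D + 1) < 1) by (apply Rmult_lt_reg_r with (D + 1); [lra|]; field_simplify; lra).
      nra.
  - fold D; exists (- (1 / (D - 1))); split; [lra|]; split.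
    + assert (0 < 1 / (D - 1)) by (apply Rdiv_lt_0_compat; lra).
      assert (0 < 1 / (D + 1)) by (apply Rdiv_lt_0_compat; lra). lra.
    + rewrite Fstar_factor, INR_sq_pred by lia; fold D c.
      replace ((- (1 / (D - 1))) ^ 2) with (/ m) by (unfold m; field; lra).
      unfold m; field; lra.
Qed.

Lemma scaled_gap_squeeze (D c H0 r : R) : 3 <= D ->
  (D * D - 1) / (D * D) <= c <= 1 -> 0 <= H0 <= / (1 - / (D - 1) ^ 2) ->
  1/2 * (1 - 1/D) + c / (2 * D * (D - 1) ^ 2) <= r <=
    1/2 * (1 - 1/D) + c * H0 / (2 * D * (D - 1) ^ 2) ->
  1 <= 2 * D ^ 3 * (r - 1/2 * (1 - 1/D)) <= 1 + 6 * / D.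
Proof.
  intros HD [Hc1 Hc2] [HH0 HH1] [Hr1 Hr2]; set (m := (D - 1) ^ 2) in *.
  assert (Hm : 4 <= m) by (unfold m; nra).
  assert (Hc0 : D * D - 1 <= D * D * c).
  { apply Rmult_le_compat_l with (r := D * D) in Hc1; [|nra].
    now replace (D * D * ((D * D - 1) / (D * D))) with (D * D - 1) in Hc1 by (field; lra). }
  replace (/ (1 - / m)) with (m / (m - 1)) in HH1 by (field; lra).
  assert (HD3 : 0 < 2 * D ^ 3) by (apply Rmult_lt_0_compat; [lra | apply pow_lt; lra]).
  split.
  - apply Rle_trans with (2 * D ^ 3 * (c / (2 * D * m))); [|apply Rmult_le_compat_l; lra].
    replace (2 * D ^ 3 * (c / (2 * D * m))) with (D * D * c / m) by (field; lra).
    apply Rmult_le_reg_r with m; [lra|]. unfold m in *; field_simplify; nra.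
  - apply Rle_trans with (2 * D ^ 3 * (c * H0 / (2 * D * m))); [apply Rmult_le_compat_l; lra|].
    replace (2 * D ^ 3 * (c * H0 / (2 * D * m))) with (D * D * (c * H0) / m) by (field; lra).
    assert (HcH : c * H0 <= m / (m - 1)) by nra.
    apply Rle_trans with (D * D * (m / (m - 1)) / m).
    + unfold Rdiv at 1 2; apply Rmult_le_compat_r; [left; apply Rinv_0_lt_compat; lra | nra].
    + replace (D * D * (m / (m - 1)) / m) with (D / (D - 2)) by (unfold m; field; nra).
      apply Rmult_le_reg_r with (D * (D - 2)); [nra|]. field_simplify; nra.
Qed.

Lemma is_lim_seq_one_plus_inv : is_lim_seq (fun n => 1 + 6 * / INR n) 1.
Proof.
  replace (Finite 1) with (Finite (1 + 6 * 0)) by (f_equal; ring).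
  apply (is_lim_seq_plus' (fun _ => 1) (fun n => 6 * / INR n) 1 (6 * 0)); [apply is_lim_seq_const|].
  apply (is_lim_seq_scal_l (fun n => / INR n) 6 0).
  change (is_lim_seq (fun n => / INR n) (Rbar_inv p_infty)).
  apply is_lim_seq_inv; [apply is_lim_seq_INR | discriminate].
Qed.

Lemma hyp2F1_at_inv_sq_bounds (D : R) : 3 <= D ->
  0 <= hyp2F1 (1/2) (1/2) ((D * D - 1) / 2 + 1) (/ (D - 1) ^ 2) <= / (1 - / (D - 1) ^ 2).
Proof.
  intros HD; assert (Hm : 4 <= (D - 1) ^ 2) by nra.
  assert (Hz : 0 < / (D - 1) ^ 2 < 1)
    by (split; [apply Rinv_0_lt_compat | rewrite <- Rinv_1; apply Rinv_lt_contravar]; lra).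
  split.
  - apply Rle_trans with 1; [lra | apply hyp2F1_ge1; [nra | lra]].
  - apply hyp2F1_le_geom; [nra | lra].
Qed.

Theorem theorem1 :
  (forall d : nat, (2 <= d)%nat ->
     Rbar_lt (Finite (1/2 * (1 - 1 / INR d))) (alpha d)) /\
  is_lim_seq
    (fun d : nat => 2 * INR d ^ 3 * (real (alpha d) - 1/2 * (1 - 1 / INR d)))
    (Finite 1).
Proof.
  split.
  - intros d Hd; destruct (alpha_bracket d Hd) as (r & -> & Hr & _); simpl.
    assert (HD : 2 <= INR d) by (replace 2 with (INR 2) by (simpl; lra); now apply le_INR).
    pose proof (gamma_ratio_bounds (INR d * INR d - 1) ltac:(nra)) as [Hc _].
    enough (0 < gamma_ratio (INR d * INR d - 1) / (2 * INR d * (INR d - 1) ^ 2)) by lra.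
    apply Rdiv_lt_0_compat; [|apply Rmult_lt_0_compat; [lra | apply pow_lt; lra]].
    eapply Rlt_le_trans; [|exact Hc]; apply Rdiv_lt_0_compat; nra.
  - apply is_lim_seq_le_le_loc with (fun _ => 1) (fun n => 1 + 6 * / INR n);
      [|apply is_lim_seq_const | apply is_lim_seq_one_plus_inv].
    exists 3%nat; intros d Hd.
    destruct (alpha_bracket d ltac:(lia)) as (r & -> & Hr); simpl.
    set (D := INR d) in *.
    assert (HD : 3 <= D) by (unfold D; replace 3 with (INR 3) by (simpl; lra); now apply le_INR).
    pose proof (gamma_ratio_bounds (D * D - 1) ltac:(nra)) as Hc.
    replace (D * D - 1 + 1) with (D * D) in Hc by ring.
    exact (scaled_gap_squeeze D _ _ r HD Hc (hyp2F1_at_inv_sq_bounds D HD) Hr).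
Qed.
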